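(* Let $J\ge 2$ be an integer (the number of reflecting surfaces, indexed $1,\dots,J$), and let $N_p, N_a$ be positive integers and $P_t, P_a, M, \kappa_B, \kappa_U, \kappa_I, \sigma^2$ be positive reals with $N_p\kappa_I<1$, i.e. $N_p<\kappa_I^{-1}$. Set $C_a = P_a N_a \kappa_U^2$ and $C_t = P_t M \kappa_B^2$, and for $l\in\{1,\dots,J\}$ define $$\gamma(l)=\frac{C_aC_tN_a(N_p\kappa_I)^{2(J-1)}}{\sigma^2C_a(N_p\kappa_I)^{2(J-l)}+\sigma^2\big(C_t(N_p\kappa_I)^{2(l-1)}+\sigma^2\big)}.$$ Let $\tilde l=\frac{J+1}{2}+\frac{\log(C_a/C_t)}{2\log(N_p^2\kappa_I^2)}$. Then an optimal solution $l_1^\star$ of $\max_{l\in\{1,\dots,J\}}\gamma(l)$ is given as follows. (I) If $C_a<C_t$: $l_1^\star=\arg\max_{l\in\{\lfloor\tilde l\rfloor,\lceil\tilde l\rceil\}}\gamma(l)$ if $N_p<(C_a/C_t)^{\frac{1}{2(J-1)}}\kappa_I^{-1}$, and $l_1^\star=J$ if $(C_a/C_t)^{\frac{1}{2(J-1)}}\kappa_I^{-1}\le N_p<\kappa_I^{-1}$. (II) If $C_a=C_t$: $l_1^\star=\arg\max_{l\in\{\lfloor\frac{J+1}{2}\rfloor,\lceil\frac{J+1}{2}\rceil\}}\gamma(l)$. (III) If $C_a>C_t$: $l_1^\star=\arg\max_{l\in\{\lfloor\tilde l\rfloor,\lceil\tilde l\rceil\}}\gamma(l)$ if $N_p<(C_t/C_a)^{\frac{1}{2(J-1)}}\kappa_I^{-1}$,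 and $l_1^\star=1$ if $(C_t/C_a)^{\frac{1}{2(J-1)}}\kappa_I^{-1}\le N_p<\kappa_I^{-1}$.
   Context: Physical setting (for interpretation): an $M$-antenna base station with transmit power $P_t$ sends information to a single-antenna user over a cascaded line-of-sight path through $J$ intelligent reflecting surfaces (IRSs) numbered $1,\dots,J$ in order from the base station; IRS $l$ is active (with $N_a$ elements, per-element amplification power limit $P_a$) and the others are passive (with $N_p$ elements each). $\kappa_B,\kappa_I,\kappa_U$ are the amplitude path gains of the base station–IRS 1 link, each inter-IRS link, and the IRS $J$–user link; $\sigma^2$ is the noise power (both amplification noise per active element and receiver noise). With optimal beamforming, the user's received SNR as a function of the active IRS index $l$ is $\gamma(l)$ above. Standing assumption: $N_p\kappa_I<1$ (the cascaded passive gain decreases with each reflection). $\lfloor\cdot\rfloor,\lceil\cdot\rceil$ are floor and ceiling. *)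

From mathcomp Require Import all_boot all_order all_algebra.
From mathcomp Require Import all_classical all_reals all_analysis.
Set Implicit Arguments. Unset Strict Implicit. Unset Printing Implicit Defensive.
Import Order.TTheory GRing.Theory Num.Theory.
Local Open Scope ring_scope.

(* SNR gamma(l) with l an integer index, x := Np * kI, exponents are integer powers *)
Definition gammaSNR {R : realType} (J : nat) (Ca Ct Na x s2 : R) (l : int) : R :=
  (Ca * Ct * Na * x ^ (2 * (J%:Z - 1)))
  / (s2 * Ca * x ^ (2 * (J%:Z - l)) + s2 * (Ct * x ^ (2 * (l - 1)) + s2)).

Definition is_opt {R : realType} (g : int -> R) (J : nat) (l : int) : Prop :=
  (1 <= l <= J%:Z) /\ (forall l' : int, 1 <= l' <= J%:Z -> g l' <= g l).

Definition argmax2 {R : realType} (g : int -> R) (a b : int) : int :=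
  if g b <= g a then a else b.

From mathcomp Require Import all_boot all_order all_algebra.
From mathcomp Require Import all_classical all_reals all_analysis.
From mathcomp Require Import lra ring.
Import Order.TTheory GRing.Theory Num.Theory.
Local Open Scope ring_scope.

(* Put L := ln ((N_p k_I)^2) < 0 and choose l~ with ln (C_a / C_t) = (2 l~ - J - 1) L.
   Then the denominator of gamma(l) is s2 (C_t e^((l~ - 1) L) (e^u + e^-u) + s2) with
   u = (l - l~) L, and e^u + e^-u grows with |u|: gamma(l) >= gamma(l') as soon as
   |l - l~| <= |l' - l~|.  The optimum over {1, ..., J} is therefore the integer of
   [1, J] nearest to l~, namely floor l~ or ceil l~ when 1 <= l~ <= J, and J or 1
   otherwise; the thresholds on N_p are exactly the conditions l~ <= J (when C_a < C_t)
   and 1 <= l~ (when C_t < C_a). *)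

Lemma floor_or_ceil_nearest (R : archiRealFieldType) (t : R) (l : int) :
  `|(Num.floor t)%:~R - t| <= `|l%:~R - t| \/
  `|(Num.ceil t)%:~R - t| <= `|l%:~R - t|.
Proof.
have Ft := floor_le t; have tC := ceil_ge t.
have [lF|Fl] := lerP l (Num.floor t).
- left; have lFR : l%:~R <= (Num.floor t)%:~R :> R by rewrite ler_int.
  rewrite !ler0_norm ?subr_le0 //; lra.
- right; have tl : t <= l%:~R.
    have /andP[_ tF1] := floor_itv t.
    have : (Num.floor t + 1)%:~R <= l%:~R :> R by rewrite ler_int lezD1.
    lra.
  have Cl : (Num.ceil t)%:~R <= l%:~R :> R by rewrite ler_int ceil_le_int.
  rewrite !ger0_norm ?subr_ge0 //; lra.
Qed.

Section Optimality.
Variables (R : realType) (g : int -> R) (J : nat).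

Lemma is_opt_argmax2 (a b : int) :
  1 <= a <= J%:Z -> 1 <= b <= J%:Z ->
  (forall l, 1 <= l <= J%:Z -> g l <= g a \/ g l <= g b) ->
  is_opt g J (argmax2 g a b).
Proof.
rewrite /argmax2 => aJ bJ dom; split; first by case: ifP.
move=> l /dom; case: ifP => [ba|/negbT]; last rewrite -ltNge; lra.
Qed.

Variable t : R.
Hypothesis g_closer :
  forall l m : int, `|m%:~R - t| <= `|l%:~R - t| -> g l <= g m.

Lemma is_opt_floor_ceil :
  1 <= t <= J%:R -> is_opt g J (argmax2 g (Num.floor t) (Num.ceil t)).
Proof.
case/andP=> t1 tJ.
have F1 : 1 <= Num.floor t by rewrite floor_ge_int.
have CJ : Num.ceil t <= J%:Z by rewrite ceil_le_int.
have FC : Num.floor t <= Num.ceil t.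
  by rewrite -(ler_int R) (le_trans (floor_le t) (ceil_ge t)).
apply: is_opt_argmax2 => [||l _].
- by rewrite F1 (le_trans FC CJ).
- by rewrite CJ (le_trans F1 FC).
- by have [] := floor_or_ceil_nearest _ t l => /g_closer; [left|right].
Qed.

Lemma is_opt_last : (0 < J)%N -> J%:R <= t -> is_opt g J J%:Z.
Proof.
move=> J0 Jt; split; first by rewrite lexx andbT lez_nat.
move=> l /andP[_ lJ]; apply: g_closer.
have lJR : l%:~R <= J%:R :> R by rewrite -(ler_int R) in lJ.
rewrite !ler0_norm ?subr_le0 //; lra.
Qed.

Lemma is_opt_first : (0 < J)%N -> t <= 1 -> is_opt g J 1.
Proof.
move=> J0 t1; split; first by rewrite lexx lez_nat.
move=> l /andP[l1 _]; apply: g_closer.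
have l1R : 1 <= l%:~R :> R by rewrite ler1z.
rewrite !ger0_norm ?subr_ge0 //; lra.
Qed.

End Optimality.

Lemma expR_addN_le (R : realType) (a b : R) :
  `|a| <= `|b| -> expR a + expR (- a) <= expR b + expR (- b).
Proof.
have even (u : R) : expR u + expR (- u) = expR `|u| + expR (- `|u|).
  by case: ler0P => _; rewrite ?opprK // addrC.
rewrite (even a) (even b); move: (normr_ge0 a) (normr_ge0 b).
set a' := `|a|; set b' := `|b| => a0 b0 ab.
have Eb : expR b' * expR (- (a' + b')) = expR (- a') by rewrite -expRD; congr expR; ring.
have Ea : expR a' * expR (- (a' + b')) = expR (- b') by rewrite -expRD; congr expR; ring.
have ab_exp : expR a' <= expR b' by rewrite ler_expR.
have y1 : expR (- (a' + b')) <= 1 by rewrite expR_le1; lra.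
(* e^b + e^-b - e^a - e^-a = (e^b - e^a) (1 - e^-(a+b)) *)
nra.
Qed.

Lemma exprz_mul2_expR (R : realType) (x : R) (z : int) :
  0 < x -> x ^ (2 * z) = expR (z%:~R * ln (x ^+ 2)).
Proof.
move=> x0; rewrite -powR_intmul ?ltW // -[LHS]lnK ?posrE ?powR_gt0 //.
by rewrite ln_powR lnXn // intrM; congr expR; ring.
Qed.

Lemma ltr_powR_ln (R : realType) (c x d : R) :
  0 < c -> 0 < x -> 0 < d -> (x < c `^ (1 / d)) = (d * ln x < ln c).
Proof.
move=> c0 x0 d0.
by rewrite -ltr_ln ?posrE ?powR_gt0 // ln_powR div1r ltr_pdivlMl.
Qed.

Lemma ltr_powR_threshold (R : realType) (c n k j : R) :
  0 < c -> 0 < n -> 0 < k -> 1 < j ->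
  (n < c `^ (1 / (2 * (j - 1))) * k^-1) = ((j - 1) * ln ((n * k) ^+ 2) < ln c).
Proof.
move=> c0 n0 k0 j1; rewrite ltr_pdivlMr // ltr_powR_ln ?mulr_gt0 ?subr_gt0 //.
by rewrite lnXn ?mulr_gt0 // mulr2n; congr (_ < _); ring.
Qed.

Section SNR.
Variables (R : realType) (J : nat) (Ca Ct Na x s2 t : R).
Hypotheses (Ca_gt0 : 0 < Ca) (Ct_gt0 : 0 < Ct) (Na_ge0 : 0 <= Na)
  (x_gt0 : 0 < x) (s2_gt0 : 0 < s2).
Hypothesis lnCaCt : ln (Ca / Ct) = (2 * t - J%:R - 1) * ln (x ^+ 2).

Let L := ln (x ^+ 2).

Lemma gammaSNR_denomE (l : int) :
  s2 * Ca * x ^ (2 * (J%:Z - l)) + s2 * (Ct * x ^ (2 * (l - 1)) + s2) =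
  s2 * (Ct * expR ((t - 1) * L) *
          (expR ((l%:~R - t) * L) + expR (- ((l%:~R - t) * L))) + s2).
Proof.
have CaE : Ca = Ct * expR ((2 * t - J%:R - 1) * L).
  by rewrite -lnCaCt lnK ?posrE ?divr_gt0 // mulrC divfK ?gt_eqF.
have E1 : expR ((2 * t - J%:R - 1) * L) * expR ((J%:Z - l)%:~R * L) =
          expR ((t - 1) * L) * expR (- ((l%:~R - t) * L)).
  by rewrite -!expRD intrB; congr expR; ring.
have E2 : expR ((l - 1)%:~R * L) = expR ((t - 1) * L) * expR ((l%:~R - t) * L).
  by rewrite -expRD intrB; congr expR; ring.
by rewrite !exprz_mul2_expR // -/L E2 CaE -!mulrA E1; ring.
Qed.

Lemma gammaSNR_closer (l m : int) :
  `|m%:~R - t| <= `|l%:~R - t| ->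
  gammaSNR J Ca Ct Na x s2 l <= gammaSNR J Ca Ct Na x s2 m.
Proof.
move=> ml; rewrite /gammaSNR !gammaSNR_denomE.
have c_gt0 : 0 < Ct * expR ((t - 1) * L) by rewrite mulr_gt0 ?expR_gt0.
have den_gt0 (k : int) :
    0 < s2 * (Ct * expR ((t - 1) * L) *
              (expR ((k%:~R - t) * L) + expR (- ((k%:~R - t) * L))) + s2).
  by rewrite mulr_gt0 // addr_gt0 // mulr_gt0 // addr_gt0 ?expR_gt0.
apply: ler_wpM2l.
  by rewrite !mulr_ge0 ?exprz_ge0 ?(ltW Ca_gt0) ?(ltW Ct_gt0) ?(ltW x_gt0).
rewrite lef_pV2 ?posrE //.
rewrite ler_pM2l // lerD2r ler_pM2l //.
by apply: expR_addN_le; rewrite !normrM ler_wpM2r.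
Qed.

End SNR.

Theorem proposition1 (R : realType) (J Np Na : nat) (Pt Pa M kB kU kI s2 : R) :
  (2 <= J)%N -> (0 < Np)%N -> (0 < Na)%N ->
  0 < Pt -> 0 < Pa -> 0 < M -> 0 < kB -> 0 < kU -> 0 < kI -> 0 < s2 ->
  Np%:R * kI < 1 ->
  let Ca := Pa * Na%:R * kU ^+ 2 in
  let Ct := Pt * M * kB ^+ 2 in
  let g := gammaSNR J Ca Ct Na%:R (Np%:R * kI) s2 in
  let lt := (J%:R + 1) / 2 + ln (Ca / Ct) / (2 * ln (Np%:R ^+ 2 * kI ^+ 2)) in
  (Ca < Ct ->
     (Np%:R < powR (Ca / Ct) (1 / (2 * (J%:R - 1))) * kI^-1 ->
        is_opt g J (argmax2 g (Num.floor lt) (Num.ceil lt))) /\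
     (powR (Ca / Ct) (1 / (2 * (J%:R - 1))) * kI^-1 <= Np%:R -> Np%:R < kI^-1 ->
        is_opt g J J%:Z)) /\
  (Ca = Ct ->
     is_opt g J (argmax2 g (Num.floor ((J%:R + 1) / 2 : R))
                           (Num.ceil ((J%:R + 1) / 2 : R)))) /\
  (Ct < Ca ->
     (Np%:R < powR (Ct / Ca) (1 / (2 * (J%:R - 1))) * kI^-1 ->
        is_opt g J (argmax2 g (Num.floor lt) (Num.ceil lt))) /\
     (powR (Ct / Ca) (1 / (2 * (J%:R - 1))) * kI^-1 <= Np%:R -> Np%:R < kI^-1 ->
        is_opt g J 1)).
Proof.
move=> J2 Np0 Na0 Pt0 Pa0 M0 kB0 kU0 kI0 s0 x1 Ca Ct g lt.
have Ca0 : 0 < Ca by rewrite !mulr_gt0 ?exprn_gt0 ?ltr0n.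
have Ct0 : 0 < Ct by rewrite !mulr_gt0 ?exprn_gt0.
set x := Np%:R * kI in x1 *; have x0 : 0 < x by rewrite mulr_gt0 ?ltr0n.
set L := ln (x ^+ 2); have L0 : L < 0 by rewrite ln_lt0 // exprn_gt0 //= expr_lt1 ?ltW.
have J0 : (0 < J)%N by apply: leq_trans J2.
have J1R : (1 : R) < J%:R by rewrite ltr1n.
have closer t := @gammaSNR_closer R J Ca Ct Na%:R x s2 t Ca0 Ct0 (ler0n _ _) x0 s0.
have ltE : ln (Ca / Ct) = (2 * lt - J%:R - 1) * L.
  by rewrite /lt -exprMn -/x -/L; field; exact: ltr0_neq0.
have below c : 0 < c ->
    (Np%:R < c `^ (1 / (2 * (J%:R - 1))) * kI^-1) = ((J%:R - 1) * L < ln c).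
  by move=> c0; rewrite ltr_powR_threshold ?ltr0n.
have above c : 0 < c ->
    (c `^ (1 / (2 * (J%:R - 1))) * kI^-1 <= Np%:R) = (ln c <= (J%:R - 1) * L).
  by move=> c0; rewrite !leNgt below.
have lnCtCa : ln (Ct / Ca) = - ln (Ca / Ct) by rewrite -invf_div lnV ?posrE ?divr_gt0.
split; [|split].
- move=> CaCt; have c0 : 0 < Ca / Ct by rewrite divr_gt0.
  have a0 : ln (Ca / Ct) < 0 by rewrite ln_lt0 // c0 ltr_pdivrMr // mul1r.
  split; rewrite ?(below _ c0) ?(above _ c0) => lnb.
  + by apply: is_opt_floor_ceil (closer _ ltE) _; apply/andP; split; nra.
  + by move=> _; apply: is_opt_last (closer _ ltE) J0 _; nra.
- move=> CaCt; apply: is_opt_floor_ceil (closer _ _) _; last by apply/andP; split; lra.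
  by rewrite CaCt divff ?gt_eqF // ln1; field.
- move=> CtCa; have c0 : 0 < Ct / Ca by rewrite divr_gt0.
  have a0 : 0 < ln (Ca / Ct) by rewrite ln_gt0 // ltr_pdivlMr // mul1r.
  split; rewrite ?(below _ c0) ?(above _ c0) lnCtCa => lnb.
  + by apply: is_opt_floor_ceil (closer _ ltE) _; apply/andP; split; nra.
  + by move=> _; apply: is_opt_first (closer _ ltE) J0 _; nra.
Qed.
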